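(* Let $\sigma$ be a 2-structure and $X\subsetneq V(\sigma)$ with $\sigma[X]$ prime; write $\overline{X}=V(\sigma)\setminus X$. Suppose Statement (S3) holds (there is no $Y\subseteq\overline{X}$ with $|Y|=3$ and $\sigma[X\cup Y]$ prime). Let $e,f\in E(\sigma)$ and $\alpha\in X$. If the outside graph $\Gamma_{(\sigma,\overline{X})}$ has no isolated vertices, then: (1) if $\langle X\rangle^{(e,f)}_\sigma\neq\emptyset$, then $\langle X\rangle^{(e',f')}_\sigma=\emptyset$ for all $e',f'\in E(\sigma)$ with $\{e',f'\}\neq\{e,f\}$; (2) if $X^{(e,f)}_\sigma(\alpha)\neq\emptyset$, then $X^{(e',f')}_\sigma(\alpha)=\emptyset$ for all $e',f'\in E(\sigma)$ with $\{e',f'\}\neq\{e,f\}$.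
   Context: A 2-structure $\sigma$ consists of a vertex set $V(\sigma)$ and an equivalence relation $\equiv_\sigma$ on ordered pairs of distinct vertices; $E(\sigma)$ is its set of classes; $\sigma[W]$ is the induced 2-structure on $W$. A module is a set $M$ such that for all $x,y\in M$ and $v\notin M$, $(x,v)\equiv_\sigma(y,v)$ and $(v,x)\equiv_\sigma(v,y)$; $\sigma$ is prime if $|V(\sigma)|\geq3$ and its only modules are $\emptyset$, $V(\sigma)$ and singletons. Given $\sigma[X]$ prime: $\langle X\rangle_\sigma=\{v\in\overline{X}: X\text{ is a module of }\sigma[X\cup\{v\}]\}$; for $\alpha\in X$, $X_\sigma(\alpha)=\{v\in\overline{X}:\{\alpha,v\}\text{ is a module of }\sigma[X\cup\{v\}]\}$. For $e,f\in E(\sigma)$: $\langle X\rangle^{(e,f)}_\sigma=\{v\in\langle X\rangle_\sigma:(v,\beta)\in e,(\beta,v)\in f\}$ for any $\beta\in X$ (independent of $\beta$); $X^{(e,f)}_\sigma(\alpha)=\{v\in X_\sigma(\alpha):(v,\alpha)\in e,(\alpha,v)\in f\}$. The outside graph $\Gamma_{(\sigma,\overline{X})}$ has vertex set $\overline{X}$ and edges the 2-element sets $Y\subseteq\overline{X}$ with $\sigma[X\cup Y]$ prime. *)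

(* plain Prop-valued sets (2-structures need not be finite). *)
Set Implicit Arguments.

Section TwoStructures.
Variable V : Type.

(* A 2-structure on the vertex set V: R x y u v means (x,y) ≡ (u,v).
   It must be an equivalence relation on ordered pairs of distinct vertices. *)
Definition is_2structure (R : V -> V -> V -> V -> Prop) : Prop :=
  (forall x y u v, R x y u v -> x <> y /\ u <> v) /\
  (forall x y, x <> y -> R x y x y) /\
  (forall x y u v, R x y u v -> R u v x y) /\
  (forall x y u v s t, R x y u v -> R u v s t -> R x y s t).

Variable R : V -> V -> V -> V -> Prop.

(* E(sigma): the equivalence classes, as relations on V (sets of ordered pairs) *)
Definition is_class (e : V -> V -> Prop) : Prop :=
  exists x y, x <> y /\ forall u v, e u v <-> R u v x y.

Definition same_class (e e' : V -> V -> Prop) : Prop :=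
  forall x y, e x y <-> e' x y.

Definition same_pair (e' f' e f : V -> V -> Prop) : Prop :=
  (same_class e' e /\ same_class f' f) \/ (same_class e' f /\ same_class f' e).

Definition is_module (W M : V -> Prop) : Prop :=
  (forall x, M x -> W x) /\
  forall x y v, M x -> M y -> W v -> ~ M v -> R x v y v /\ R v x v y.

Definition prime_on (W : V -> Prop) : Prop :=
  (exists a b c, W a /\ W b /\ W c /\ a <> b /\ a <> c /\ b <> c) /\
  forall M, is_module W M ->
    (forall x, ~ M x) \/ (forall x, M x <-> W x) \/
    (exists a, forall x, M x <-> x = a).

Definition setU1 (X : V -> Prop) (v : V) : V -> Prop := fun z => X z \/ z = v.

Definition extX (X : V -> Prop) (v : V) : Prop :=
  ~ X v /\ is_module (setU1 X v) X.

Definition extX_ef (X : V -> Prop) (e f : V -> V -> Prop) (v : V) : Prop :=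
  extX X v /\ forall b, X b -> e v b /\ f b v.

Definition partX (X : V -> Prop) (a v : V) : Prop :=
  ~ X v /\ is_module (setU1 X v) (fun z => z = a \/ z = v).

Definition partX_ef (X : V -> Prop) (e f : V -> V -> Prop) (a v : V) : Prop :=
  partX X a v /\ e v a /\ f a v.

Definition outside_edge (X : V -> Prop) (v w : V) : Prop :=
  ~ X v /\ ~ X w /\ v <> w /\ prime_on (fun z => X z \/ z = v \/ z = w).

Definition S3 (X : V -> Prop) : Prop :=
  ~ exists a b c, ~ X a /\ ~ X b /\ ~ X c /\ a <> b /\ a <> c /\ b <> c /\
      prime_on (fun z => X z \/ z = a \/ z = b \/ z = c).

Definition no_isolated (X : V -> Prop) : Prop :=
  forall v, ~ X v -> exists w, outside_edge X v w.

End TwoStructures.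

(* Fix an outside edge {v, v'}, so that Y = X ∪ {v, v'} is prime. A vertex w
   outside Y for which Y ∪ {w} is not prime lies in ⟨Y⟩ or in some Y(b); by
   (S3) this applies to every other w ∈ ⟨X⟩ (resp. X(α)). Primality of X and
   of Y rules out every case except one: if w is not of the same type as v
   at α, then w relates to v the way it relates to α (resp. the way α
   relates to v). Applying this with the roles of v and w exchanged
   identifies the classes of (w, α) and (α, w) with those of (α, v) and
   (v, α), i.e. {e', f'} = {e, f}. *)

From Stdlib Require Import Classical.

Set Implicit Arguments.
Unset Strict Implicit.

Section TwoStructure.

Variable V : Type.
Variable R : V -> V -> V -> V -> Prop.
Hypothesis hR : is_2structure R.

Lemma R_refl x y : x <> y -> R x y x y.
Proof. destruct hR as (_ & h & _). exact (h x y). Qed.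

Lemma R_sym x y u v : R x y u v -> R u v x y.
Proof. destruct hR as (_ & _ & h & _). exact (h x y u v). Qed.

Lemma R_trans x y u v s t : R x y u v -> R u v s t -> R x y s t.
Proof. destruct hR as (_ & _ & _ & h). exact (h x y u v s t). Qed.

Lemma same_class_of_R (e e' : V -> V -> Prop) a b c d :
  is_class R e -> is_class R e' -> e a b -> e' c d -> R a b c d -> same_class e e'.
Proof.
  intros (x & y & _ & he) (x' & y' & _ & he') hab hcd habcd.
  apply he in hab. apply he' in hcd.
  assert (hxy : R x y x' y') by exact (R_trans (R_sym hab) (R_trans habcd hcd)).
  intros p q. rewrite he, he'. split; intro h.
  - exact (R_trans h hxy).
  - exact (R_trans h (R_sym hxy)).
Qed.

Lemma same_pair_of_same_type (e f e' f' : V -> V -> Prop) a v w :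
  is_class R e -> is_class R f -> is_class R e' -> is_class R f' ->
  e v a -> f a v -> e' w a -> f' a w ->
  R v a w a -> R a v a w -> same_pair e' f' e f.
Proof.
  intros he hf he' hf' ev fv ew fw h1 h2. left. split.
  - exact (same_class_of_R he' he ew ev (R_sym h1)).
  - exact (same_class_of_R hf' hf fw fv (R_sym h2)).
Qed.

Lemma same_pair_of_crossed_type (e f e' f' : V -> V -> Prop) a v w :
  is_class R e -> is_class R f -> is_class R e' -> is_class R f' ->
  e v a -> f a v -> e' w a -> f' a w ->
  R w v w a -> R w v a v -> R v w a w -> R v w v a -> same_pair e' f' e f.
Proof.
  intros he hf he' hf' ev fv ew fw h1 h2 h3 h4. right. split.
  - exact (same_class_of_R he' hf ew fv (R_trans (R_sym h1) h2)).
  - exact (same_class_of_R hf' he fw ev (R_trans (R_sym h3) h4)).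
Qed.

Lemma is_module_ext (W W' M M' : V -> Prop) :
  (forall z, W z <-> W' z) -> (forall z, M z <-> M' z) ->
  is_module R W M -> is_module R W' M'.
Proof.
  intros hW hM [hsub hmod]. split.
  - intros z hz. apply hW, hsub, hM, hz.
  - intros x y z hx hy hz hnz.
    apply hmod; [apply hM, hx | apply hM, hy | apply hW, hz | rewrite hM; exact hnz].
Qed.

Lemma prime_on_ext (W W' : V -> Prop) :
  (forall z, W z <-> W' z) -> prime_on R W -> prime_on R W'.
Proof.
  intros hW [(a & b & c & ha & hb & hc & hdist) hprime]. split.
  - exists a, b, c. rewrite <- !hW. auto.
  - intros M hM.
    assert (hMW : is_module R W M).
    { apply (is_module_ext (W := W') (M := M)); [intro z; symmetry; apply hW | tauto | exact hM]. }
    destruct (hprime M hMW) as [h | [h | h]]; auto.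
    right; left. intro x. rewrite h. apply hW.
Qed.

Lemma no_nontrivial_module (W M : V -> Prop) a b c :
  prime_on R W -> is_module R W M -> M a -> M b -> a <> b -> W c -> ~ M c -> False.
Proof.
  intros [_ hprime] hM ha hb hab hc hnc.
  destruct (hprime M hM) as [h | [h | [d h]]].
  - exact (h a ha).
  - exact (hnc (proj2 (h c) hc)).
  - apply hab. rewrite (proj1 (h a) ha), (proj1 (h b) hb). reflexivity.
Qed.

Lemma prime_on_avoid2 (W : V -> Prop) a b :
  prime_on R W -> exists c, W c /\ c <> a /\ c <> b.
Proof.
  intros [(x & y & z & hx & hy & hz & hxy & hxz & hyz) _].
  destruct (classic (x = a)), (classic (x = b)), (classic (y = a)),
    (classic (y = b)), (classic (z = a)), (classic (z = b));
    first [exists x; tauto | exists y; tauto | exists z; tauto | congruence].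
Qed.

Lemma prime_on_avoid1_pair (W : V -> Prop) b :
  prime_on R W -> exists x y, W x /\ W y /\ x <> y /\ x <> b /\ y <> b.
Proof.
  intros hW.
  destruct (prime_on_avoid2 b b hW) as (x & hx & hxb & _).
  destruct (prime_on_avoid2 x b hW) as (y & hy & hyx & hyb).
  exists x, y. repeat split; auto; congruence.
Qed.

Lemma is_module_of_twins (W M : V -> Prop) a :
  (forall x, M x -> W x) -> M a ->
  (forall x z, M x -> W z -> ~ M z -> R a z x z /\ R z a z x) ->
  is_module R W M.
Proof.
  intros hsub ha htwin. split; [exact hsub|].
  intros x y z hx hy hz hnz.
  destruct (htwin x z hx hz hnz) as [hx1 hx2], (htwin y z hy hz hnz) as [hy1 hy2].
  split; [exact (R_trans (R_sym hx1) hy1) | exact (R_trans (R_sym hx2) hy2)].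
Qed.

Lemma is_module_pair (W : V -> Prop) a b :
  W a -> W b -> (forall z, W z -> z <> a -> z <> b -> R a z b z /\ R z a z b) ->
  is_module R W (fun z => z = a \/ z = b).
Proof.
  intros ha hb htwin. apply is_module_of_twins with a.
  - intros x [-> | ->]; assumption.
  - now left.
  - intros x z [-> | ->] hz hnz.
    + split; apply R_refl; intro; subst; tauto.
    + apply htwin; tauto.
Qed.

Lemma extX_uniform (W : V -> Prop) w x y :
  extX R W w -> W x -> W y -> R x w y w /\ R w x w y.
Proof.
  intros [hw [_ hmod]] hx hy.
  apply hmod; [exact hx | exact hy | now right | exact hw].
Qed.

Lemma extX_intro (W : V -> Prop) w :
  ~ W w -> (forall x y, W x -> W y -> R x w y w /\ R w x w y) -> extX R W w.
Proof.
  intros hw huni. split; [exact hw|]. split; [intros z hz; now left|].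
  intros x y z hx hy [hz | ->] hnz; [contradiction | auto].
Qed.

Lemma partX_twin (W : V -> Prop) b w z :
  partX R W b w -> W z -> z <> b -> R b z w z /\ R z b z w.
Proof.
  intros [hw [_ hmod]] hz hzb.
  apply hmod; [now left | now right | now left |].
  intros [-> | ->]; [exact (hzb eq_refl) | exact (hw hz)].
Qed.

Lemma partX_intro (W : V -> Prop) b w :
  W b -> ~ W w -> (forall z, W z -> z <> b -> R b z w z /\ R z b z w) -> partX R W b w.
Proof.
  intros hb hw htwin. split; [exact hw|].
  apply is_module_pair; [now left | now right |].
  intros z [hz | ->] hzb hzw; [auto | congruence].
Qed.

Lemma extX_sub (X Y : V -> Prop) w :
  (forall z, X z -> Y z) -> extX R Y w -> extX R X w.
Proof.
  intros hXY hw. apply extX_intro.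
  - intro hXw. exact (proj1 hw (hXY w hXw)).
  - intros x y hx hy. apply (extX_uniform hw); auto.
Qed.

Lemma partX_sub (X Y : V -> Prop) b w :
  (forall z, X z -> Y z) -> X b -> partX R Y b w -> partX R X b w.
Proof.
  intros hXY hb hw. apply partX_intro; [exact hb | |].
  - intro hXw. exact (proj1 hw (hXY w hXw)).
  - intros z hz hzb. apply (partX_twin hw); auto.
Qed.

Lemma extX_of_twin (X Y : V -> Prop) u w :
  (forall z, X z -> Y z) -> ~ X u -> partX R Y u w -> extX R X w -> extX R X u.
Proof.
  intros hXY hu htwin hw. apply extX_intro; [exact hu|].
  intros x y hx hy.
  assert (hxu : x <> u) by (intros ->; contradiction).
  assert (hyu : y <> u) by (intros ->; contradiction).
  destruct (partX_twin htwin (hXY x hx) hxu) as [hx1 hx2].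
  destruct (partX_twin htwin (hXY y hy) hyu) as [hy1 hy2].
  destruct (extX_uniform hw hx hy) as [hxy1 hxy2].
  split.
  - exact (R_trans hx2 (R_trans hxy1 (R_sym hy2))).
  - exact (R_trans hx1 (R_trans hxy2 (R_sym hy1))).
Qed.

Lemma partX_of_twin (X Y : V -> Prop) a u w :
  (forall z, X z -> Y z) -> X a -> ~ X u ->
  partX R Y u w -> partX R X a w -> partX R X a u.
Proof.
  intros hXY ha hu htwin hw. apply partX_intro; [exact ha | exact hu |].
  intros z hz hza.
  assert (hzu : z <> u) by (intros ->; contradiction).
  destruct (partX_twin hw hz hza) as [h1 h2].
  destruct (partX_twin htwin (hXY z hz) hzu) as [h3 h4].
  split; [exact (R_trans h1 (R_sym h3)) | exact (R_trans h2 (R_sym h4))].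
Qed.

(* X \ {b} would be a module of X. *)
Lemma extX_partX_absurd (X : V -> Prop) b w :
  prime_on R X -> X b -> extX R X w -> partX R X b w -> False.
Proof.
  intros hX hb hext hpart.
  destruct (prime_on_avoid1_pair b hX) as (x & y & hx & hy & hxy & hxb & hyb).
  apply (no_nontrivial_module (M := fun z => X z /\ z <> b) (a := x) (b := y) (c := b) hX);
    [| split; assumption | split; assumption | exact hxy | exact hb | tauto].
  apply is_module_of_twins with x; [tauto | split; assumption |].
  intros x' z [hx' hx'b] hz hnz.
  assert (z = b) as -> by (apply NNPP; tauto).
  destruct (partX_twin hpart hx hxb) as [h1 h2].
  destruct (partX_twin hpart hx' hx'b) as [h3 h4].
  destruct (extX_uniform hext hx hx') as [h5 h6].
  split; [exact (R_trans h2 (R_trans h5 (R_sym h4)))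
         | exact (R_trans h1 (R_trans h6 (R_sym h3)))].
Qed.

(* {a, b} would be a module of X. *)
Lemma partX_partX_absurd (X : V -> Prop) a b w :
  prime_on R X -> X a -> X b -> a <> b -> partX R X a w -> partX R X b w -> False.
Proof.
  intros hX ha hb hab hwa hwb.
  destruct (prime_on_avoid2 a b hX) as (c & hc & hca & hcb).
  apply (no_nontrivial_module (M := fun z => z = a \/ z = b) (a := a) (b := b) (c := c) hX);
    [| now left | now right | exact hab | exact hc | tauto].
  apply is_module_pair; [exact ha | exact hb |].
  intros z hz hza hzb.
  destruct (partX_twin hwa hz hza) as [h1 h2], (partX_twin hwb hz hzb) as [h3 h4].
  split; [exact (R_trans h1 (R_sym h3)) | exact (R_trans h2 (R_sym h4))].
Qed.

Definition setU2 (X : V -> Prop) (v v' : V) : V -> Prop := fun z => X z \/ z = v \/ z = v'.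

Lemma extX_pair_not_prime (X : V -> Prop) v v' :
  prime_on R X -> extX R X v -> extX R X v' -> ~ prime_on R (setU2 X v v').
Proof.
  intros [(a & b & _ & ha & hb & _ & hab & _) _] hv hv' hY.
  apply (no_nontrivial_module (M := X) (a := a) (b := b) (c := v) hY); [| exact ha | exact hb | exact hab
                                              | right; now left | exact (proj1 hv)].
  split; [intros z hz; now left|].
  intros x y z hx hy [hz | [-> | ->]] hnz;
    [contradiction | apply (extX_uniform hv) | apply (extX_uniform hv')]; assumption.
Qed.

Lemma partX_pair_not_prime (X : V -> Prop) a v v' :
  prime_on R X -> X a -> partX R X a v -> partX R X a v' -> ~ prime_on R (setU2 X v v').
Proof.
  intros hX ha hv hv' hY.
  assert (hva : v <> a) by (intros ->; exact (proj1 hv ha)).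
  assert (hv'a : v' <> a) by (intros ->; exact (proj1 hv' ha)).
  destruct (prime_on_avoid2 a a hX) as (c & hc & hca & _).
  assert (hcv : c <> v) by (intros ->; exact (proj1 hv hc)).
  assert (hcv' : c <> v') by (intros ->; exact (proj1 hv' hc)).
  apply (no_nontrivial_module (M := fun z => z = a \/ z = v \/ z = v') (a := a) (b := v) (c := c) hY);
    [| now left | right; now left | congruence | now left | tauto].
  apply is_module_of_twins with a; [intros x [-> | [-> | ->]]; unfold setU2; tauto | now left |].
  intros x z hx hz hnz.
  assert (hXz : X z) by (destruct hz as [hz | [-> | ->]]; tauto).
  assert (hza : z <> a) by tauto.
  destruct hx as [-> | [-> | ->]].
  - split; apply R_refl; congruence.
  - exact (partX_twin hv hXz hza).
  - exact (partX_twin hv' hXz hza).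
Qed.

Lemma prime_on_setU1 (Y : V -> Prop) u :
  prime_on R Y -> ~ Y u -> ~ extX R Y u -> (forall b, Y b -> ~ partX R Y b u) ->
  prime_on R (setU1 Y u).
Proof.
  intros [(a & b & c & ha & hb & hc & hdist) hprime] hu hext hpart. split.
  { exists a, b, c. unfold setU1. tauto. }
  intros M hM.
  assert (hMsub : forall z, M z -> Y z \/ z = u) by apply hM.
  assert (hMY : is_module R Y (fun z => M z /\ Y z)).
  { destruct hM as [_ hmod]. split; [tauto|].
    intros x y z [hx _] [hy _] hz hnz. apply hmod; [exact hx | exact hy | now left | tauto]. }
  destruct (hprime _ hMY) as [h | [h | [d h]]]; destruct (classic (M u)) as [hMu | hMu].
  - right; right. exists u. intro x. split; [| intros ->; exact hMu].
    intro hx. destruct (hMsub x hx) as [hy | ->]; [destruct (h x (conj hx hy)) | reflexivity].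
  - left. intros x hx.
    destruct (hMsub x hx) as [hy | ->]; [exact (h x (conj hx hy)) | exact (hMu hx)].
  - right; left. intro x. split; [apply hMsub|].
    intros [hy | ->]; [apply h, hy | exact hMu].
  - exfalso. apply hext. split; [exact hu|].
    apply (is_module_ext (W := setU1 Y u) (M := M)); [tauto | | exact hM].
    intro z. split; [| apply h].
    intro hz. destruct (hMsub z hz) as [hy | ->]; [exact hy | contradiction].
  - exfalso. assert (hd : M d /\ Y d) by (apply h; reflexivity).
    apply (hpart d (proj2 hd)). split; [exact hu|].
    apply (is_module_ext (W := setU1 Y u) (M := M)); [tauto | | exact hM].
    intro z. split.
    + intro hz. destruct (hMsub z hz) as [hy | ->]; [left; apply h; auto | now right].
    + intros [-> | ->]; [exact (proj1 hd) | exact hMu].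
  - right; right. exists d. intro x. split.
    + intro hx. destruct (hMsub x hx) as [hy | ->]; [apply h; auto | contradiction].
    + intros ->. apply h. reflexivity.
Qed.

Lemma S3_edge_extension (X : V -> Prop) v v' w :
  S3 R X -> outside_edge R X v v' -> ~ X w -> w <> v -> w <> v' ->
  extX R (setU2 X v v') w \/
  exists b, setU2 X v v' b /\ partX R (setU2 X v v') b w.
Proof.
  intros hS3 (hv & hv' & hvv' & hY) hw hwv hwv'.
  apply NNPP. intro hnot. apply hS3. exists v, v', w.
  do 6 (split; [congruence || assumption|]).
  apply (prime_on_ext (W := setU1 (setU2 X v v') w)); [unfold setU1, setU2; tauto|].
  apply prime_on_setU1; [exact hY | unfold setU2; tauto | |].
  - intro hext. apply hnot. now left.
  - intros b hb hbw. apply hnot. right. exists b. auto.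
Qed.

Lemma extX_edge_cross (X : V -> Prop) a v v' w :
  prime_on R X -> S3 R X -> X a -> extX R X v -> extX R X w -> outside_edge R X v v' ->
  ~ (R v a w a /\ R a v a w) -> R w v w a /\ R v w a w.
Proof.
  intros hX hS3 ha hv hw hedge htype.
  pose proof hedge as (_ & hv' & _ & hY).
  assert (hXY : forall z, X z -> setU2 X v v' z) by (intros z hz; now left).
  assert (hva : v <> a) by (intros ->; exact (proj1 hv ha)).
  assert (hwv : w <> v) by (intros ->; apply htype; split; apply R_refl; congruence).
  assert (hwv' : w <> v') by (intros ->; exact (extX_pair_not_prime hX hv hw hY)).
  destruct (S3_edge_extension hS3 hedge (proj1 hw) hwv hwv') as [hext | (b & hb & hbw)].
  - destruct (extX_uniform (x := v) (y := a) hext) as [h1 h2]; [right; now left | now left |].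
    split; assumption.
  - exfalso. destruct hb as [hb | [-> | ->]].
    + exact (extX_partX_absurd hX hb hw (partX_sub hXY hb hbw)).
    + exact (htype (partX_twin hbw (or_introl ha) (not_eq_sym hva))).
    + exact (extX_pair_not_prime hX hv (extX_of_twin hXY hv' hbw hw) hY).
Qed.

Lemma partX_edge_cross (X : V -> Prop) a v v' w :
  prime_on R X -> S3 R X -> X a -> partX R X a v -> partX R X a w -> outside_edge R X v v' ->
  ~ (R v a w a /\ R a v a w) -> R w v a v /\ R v w v a.
Proof.
  intros hX hS3 ha hv hw hedge htype.
  pose proof hedge as (_ & hv' & _ & hY).
  assert (hXY : forall z, X z -> setU2 X v v' z) by (intros z hz; now left).
  assert (hva : v <> a) by (intros ->; exact (proj1 hv ha)).
  assert (hwv : w <> v) by (intros ->; apply htype; split; apply R_refl; congruence).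
  assert (hwv' : w <> v') by (intros ->; exact (partX_pair_not_prime hX ha hv hw hY)).
  destruct (S3_edge_extension hS3 hedge (proj1 hw) hwv hwv') as [hext | (b & hb & hbw)].
  - exfalso. exact (extX_partX_absurd hX ha (extX_sub hXY hext) hw).
  - destruct hb as [hb | [-> | ->]].
    + destruct (classic (b = a)) as [-> | hba].
      * destruct (partX_twin (z := v) hbw) as [h1 h2]; [right; now left | exact hva |].
        split; apply R_sym; assumption.
      * exfalso. exact (partX_partX_absurd hX ha hb (not_eq_sym hba) hw (partX_sub hXY hb hbw)).
    + exfalso. exact (htype (partX_twin hbw (or_introl ha) (not_eq_sym hva))).
    + exfalso. exact (partX_pair_not_prime hX ha hv (partX_of_twin hXY ha hv' hbw hw) hY).
Qed.

End TwoStructure.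

Theorem lemma3p6 (V : Type) (R : V -> V -> V -> V -> Prop) (X : V -> Prop)
  (hR : is_2structure R)
  (hXproper : exists v, ~ X v)
  (hXprime : prime_on R X)
  (hS3 : S3 R X)
  (e f : V -> V -> Prop) (he : is_class R e) (hf : is_class R f)
  (alpha : V) (halpha : X alpha)
  (hiso : no_isolated R X) :
  ((exists v, extX_ef R X e f v) ->
     forall e' f', is_class R e' -> is_class R f' -> ~ same_pair e' f' e f ->
       forall v, ~ extX_ef R X e' f' v) /\
  ((exists v, partX_ef R X e f alpha v) ->
     forall e' f', is_class R e' -> is_class R f' -> ~ same_pair e' f' e f ->
       forall v, ~ partX_ef R X e' f' alpha v).
Proof.
  split; intros [v hv] e' f' he' hf' hnpair w hw; apply hnpair;
    destruct (hiso v (proj1 (proj1 hv))) as [v' hv'], (hiso w (proj1 (proj1 hw))) as [w' hw'].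
  - destruct hv as [hv hvef], hw as [hw hwef].
    destruct (hvef alpha halpha) as [ev fv], (hwef alpha halpha) as [ew fw].
    destruct (classic (R v alpha w alpha /\ R alpha v alpha w)) as [[h1 h2] | htype].
    + exact (same_pair_of_same_type hR he hf he' hf' ev fv ew fw h1 h2).
    + destruct (extX_edge_cross hR hXprime hS3 halpha hv hw hv' htype) as [h1 h2].
      destruct (extX_edge_cross hR hXprime hS3 halpha hw hv hw'
                  (fun '(conj h3 h4) => htype (conj (R_sym hR h3) (R_sym hR h4)))) as [h3 h4].
      exact (same_pair_of_crossed_type hR he hf he' hf' ev fv ew fw h1 h4 h2 h3).
  - destruct hv as [hv [ev fv]], hw as [hw [ew fw]].
    destruct (classic (R v alpha w alpha /\ R alpha v alpha w)) as [[h1 h2] | htype].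
    + exact (same_pair_of_same_type hR he hf he' hf' ev fv ew fw h1 h2).
    + destruct (partX_edge_cross hR hXprime hS3 halpha hv hw hv' htype) as [h1 h2].
      destruct (partX_edge_cross hR hXprime hS3 halpha hw hv hw'
                  (fun '(conj h3 h4) => htype (conj (R_sym hR h3) (R_sym hR h4)))) as [h3 h4].
      exact (same_pair_of_crossed_type hR he hf he' hf' ev fv ew fw h4 h1 h3 h2).
Qed.
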